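(* Let $A \in \mathbb{Q}^{m\times n}$, $b \in \mathbb{Q}^m$, and $E = [c_1,d_1]\cup\cdots\cup[c_k,d_k]$ with $0 = c_1 < d_1 < c_2 < \cdots < c_k < d_k = 1$. Let $\sigma \in [k]^n$ be such that the box $\prod_{i=1}^n [c_{\sigma_i}, d_{\sigma_i}]$ is disjoint from $K_1 = \{x \in [0,1]^n : Ax \le b\}$. Let $K_2 = \{ p \in [0,1]^{n\times k} : \sum_{i,j} p_{ij} = 1,\ p_{ij} \ge 0,\ p_{i\sigma_i} = 0 \ \forall i\}$ and \[ f(x,p) = \sum_{i=1}^n \sum_{j=1}^k p_{ij}\left[(1-x_i)\frac{U_0(j)}{U_0(\sigma_i)} + x_i\frac{U_1(j)}{U_1(\sigma_i)}\right]. \] Then for every $x \in K_1$ there exists $p \in K_2$ with $f(x,p) \ge 1$.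
   Context: For $i \in [k]$, $U_0(i) = \prod_{j=1}^{i-1} \frac{1 - c_{j+1}}{1 - d_j}$ and $U_1(i) = \prod_{l=i}^{k-1} \frac{d_l}{c_{l+1}}$ (empty products equal $1$). *)

From mathcomp Require Import all_boot all_order all_algebra.
Set Implicit Arguments. Unset Strict Implicit. Unset Printing Implicit Defensive.
Import Order.TTheory GRing.Theory Num.Theory.
Local Open Scope ring_scope.

(* Conventions: indices of the intervals [c_j, d_j] are 1-based naturals
   j = 1..k; c d : nat -> R (values outside 1..k are irrelevant).
   Coordinates i range over 'I_n. *)

Definition U0 (R : realFieldType) (c d : nat -> R) (i : nat) : R :=
  \prod_(1 <= j < i) ((1 - c j.+1) / (1 - d j)).

Definition U1 (R : realFieldType) (k : nat) (c d : nat -> R) (i : nat) : R :=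
  \prod_(i <= l < k) (d l / c l.+1).

Definition valid_intervals (R : realFieldType) (k : nat) (c d : nat -> R) : Prop :=
  (0 < k)%N /\ c 1%N = 0 /\ d k = 1 /\
  (forall j, (1 <= j <= k)%N -> c j < d j) /\
  (forall j, (1 <= j < k)%N -> d j < c j.+1).

Definition K1 (R : realFieldType) (m n : nat) (A : 'M[rat]_(m, n))
  (b : 'cV[rat]_m) (x : 'I_n -> R) : Prop :=
  (forall i, 0 <= x i <= 1) /\
  (forall r : 'I_m, \sum_(i < n) ratr (A r i) * x i <= ratr (b r 0)).

Definition in_box (R : realFieldType) (n : nat) (c d : nat -> R)
  (sigma : 'I_n -> nat) (x : 'I_n -> R) : Prop :=
  forall i, c (sigma i) <= x i <= d (sigma i).

Definition K2 (R : realFieldType) (n k : nat) (sigma : 'I_n -> nat)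
  (p : 'I_n -> nat -> R) : Prop :=
  (forall i j, (1 <= j <= k)%N -> 0 <= p i j <= 1) /\
  \sum_(i < n) \sum_(1 <= j < k.+1) p i j = 1 /\
  (forall i, p i (sigma i) = 0).

Definition f_obj (R : realFieldType) (n k : nat) (c d : nat -> R)
  (sigma : 'I_n -> nat) (x : 'I_n -> R) (p : 'I_n -> nat -> R) : R :=
  \sum_(i < n) \sum_(1 <= j < k.+1)
     p i j * ((1 - x i) * (U0 c d j / U0 c d (sigma i))
              + x i * (U1 k c d j / U1 k c d (sigma i))).

From mathcomp Require Import all_boot all_order all_algebra.
From mathcomp Require Import ring lra zify.
Import Order.TTheory GRing.Theory Num.Theory.
Local Open Scope ring_scope.

(* Some coordinate i of x leaves [c_s, d_s], s = sigma_i.  If x_i < c_s, put all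
   the mass of p on the neighbouring interval s - 1, otherwise on s + 1.  Then
   f(x, p) is affine in x_i, the ratios of the U's telescope to a single gap
   factor, and the affine function equals 1 at the endpoint of [c_s, d_s] facing
   that gap and increases away from it. *)

Lemma affine_ratio_ge1 (R : realFieldType) (a b x : R) :
  0 < b < 1 -> 0 <= (x - b) * (a - b) ->
  1 <= (1 - x) * ((1 - a) / (1 - b)) + x * (a / b).
Proof.
move=> /andP[b_gt0 b_lt1] sign.
have -> : (1 - x) * ((1 - a) / (1 - b)) + x * (a / b)
          = 1 + (x - b) * (a - b) / (b * (1 - b)).
  by field; rewrite subr_eq0 !gt_eqF.
by rewrite lerDl divr_ge0 // mulr_ge0 ?subr_ge0 ?ltW.
Qed.

Section Intervals.
Variables (R : realFieldType) (k : nat) (c d : nat -> R).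

Lemma U0S t : (1 <= t)%N -> U0 c d t.+1 = U0 c d t * ((1 - c t.+1) / (1 - d t)).
Proof. by move=> t_ge1; rewrite /U0 big_nat_recr. Qed.

Lemma U1S t : (t < k)%N -> U1 k c d t = d t / c t.+1 * U1 k c d t.+1.
Proof. by move=> t_lt_k; rewrite /U1 big_ltn. Qed.

Hypothesis valid : valid_intervals k c d.

Let c1 : c 1%N = 0 := proj1 (proj2 valid).
Let dk : d k = 1 := proj1 (proj2 (proj2 valid)).
Let c_lt_d : forall j, (1 <= j <= k)%N -> c j < d j := proj1 (proj2 (proj2 (proj2 valid))).
Let d_lt_c : forall j, (1 <= j < k)%N -> d j < c j.+1 := proj2 (proj2 (proj2 (proj2 valid))).

Lemma c_ge0 j : (1 <= j <= k)%N -> 0 <= c j.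
Proof.
elim: j => [|[|j] IH] // j_range; first by rewrite c1.
have := IH ltac:(lia); have := c_lt_d j.+1 ltac:(lia); have := d_lt_c j.+1 ltac:(lia).
lra.
Qed.

Lemma d_le1 j : (1 <= j <= k)%N -> d j <= 1.
Proof.
move: {2}(k - j)%N (erefl (k - j)%N) => t; elim: t j => [|t IH] j t_def j_range.
  have -> : j = k by lia.
  by rewrite dk.
have := IH j.+1 ltac:(lia) ltac:(lia); have := c_lt_d j.+1 ltac:(lia).
have := d_lt_c j ltac:(lia); lra.
Qed.

Lemma gap_bounds j : (1 <= j < k)%N -> [/\ 0 < d j, d j < c j.+1 & c j.+1 < 1].
Proof.
move=> j_range; have := c_ge0 j ltac:(lia); have := c_lt_d j ltac:(lia).
have := d_lt_c j j_range; have := c_lt_d j.+1 ltac:(lia); have := d_le1 j.+1 ltac:(lia).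
by split; lra.
Qed.

Lemma U0_gt0 t : (t <= k)%N -> 0 < U0 c d t.
Proof.
move=> t_le_k; rewrite /U0 big_seq; apply: prodr_gt0 => j; rewrite mem_iota => j_range.
have [_ d_lt_next next_lt1] := gap_bounds j ltac:(lia).
by apply: divr_gt0; rewrite subr_gt0 //; apply: lt_trans next_lt1.
Qed.

Lemma U1_gt0 t : (1 <= t)%N -> 0 < U1 k c d t.
Proof.
move=> t_ge1; rewrite /U1 big_seq; apply: prodr_gt0 => l; rewrite mem_iota => l_range.
have [d_gt0 d_lt_next _] := gap_bounds l ltac:(lia).
by apply: divr_gt0 => //; apply: lt_trans d_lt_next.
Qed.

Lemma U_ratio_down_ge1 t y : (1 <= t < k)%N -> y <= c t.+1 ->
  1 <= (1 - y) * (U0 c d t / U0 c d t.+1) + y * (U1 k c d t / U1 k c d t.+1).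
Proof.
move=> t_range y_le.
have [d_gt0 d_lt_next next_lt1] := gap_bounds t t_range.
have /andP[t_ge1 t_lt_k] := t_range.
have U0_neq0 : U0 c d t != 0 by rewrite lt0r_neq0 // U0_gt0 //; lia.
have U1_neq0 : U1 k c d t.+1 != 0 by rewrite lt0r_neq0 // U1_gt0.
rewrite (U0S _ t_ge1) (U1S _ t_lt_k).
rewrite invfM mulVKf // invf_div mulfK //.
apply: affine_ratio_ge1; first by rewrite (lt_trans d_gt0).
by rewrite mulr_le0 ?subr_le0 ?(ltW d_lt_next).
Qed.

Lemma U_ratio_up_ge1 t y : (1 <= t < k)%N -> d t <= y ->
  1 <= (1 - y) * (U0 c d t.+1 / U0 c d t) + y * (U1 k c d t.+1 / U1 k c d t).
Proof.
move=> t_range d_le_y.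
have [d_gt0 d_lt_next next_lt1] := gap_bounds t t_range.
have /andP[t_ge1 t_lt_k] := t_range.
have U0_neq0 : U0 c d t != 0 by rewrite lt0r_neq0 // U0_gt0 //; lia.
have U1_neq0 : U1 k c d t.+1 != 0 by rewrite lt0r_neq0 // U1_gt0.
rewrite (U0S _ t_ge1) (U1S _ t_lt_k).
rewrite [U0 c d t * _]mulrC mulfK // [_ * U1 k c d t.+1]mulrC invfM mulVKf // invf_div.
apply: affine_ratio_ge1; first by rewrite d_gt0 (lt_trans d_lt_next).
by rewrite mulr_ge0 ?subr_ge0 ?(ltW d_lt_next).
Qed.

End Intervals.

Section PointMass.
Variables (R : realFieldType) (n : nat) (i0 : 'I_n) (j0 : nat).

Definition point_mass : 'I_n -> nat -> R := fun i j => ((i == i0) && (j == j0))%:R.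

Lemma sum_point_mass k (F : 'I_n -> nat -> R) : (1 <= j0 <= k)%N ->
  \sum_(i < n) \sum_(1 <= j < k.+1) point_mass i j * F i j = F i0 j0.
Proof.
move=> j0_range; rewrite (bigD1 i0) //= [X in _ + X]big1 => [|i i_neq]; last first.
  by rewrite big1 // => j _; rewrite /point_mass (negbTE i_neq) mul0r.
rewrite addr0 (eq_bigr (fun j => if j == j0 then F i0 j else 0)); last first.
  by move=> j _; rewrite /point_mass eqxx; case: eqP; rewrite ?mul1r ?mul0r.
by rewrite -big_mkcond big_nat1_eq ifT //; lia.
Qed.

Lemma point_mass_K2 k (sigma : 'I_n -> nat) : (1 <= j0 <= k)%N -> j0 != sigma i0 ->
  K2 k sigma point_mass.
Proof.
move=> j0_range j0_neq; split; [|split].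
- by move=> i j _; rewrite /point_mass ler0n lern1 leq_b1.
- rewrite -[RHS](sum_point_mass k (fun _ _ => 1) j0_range).
  by apply: eq_bigr => i _; apply: eq_bigr => j _; rewrite mulr1.
- move=> i; rewrite /point_mass; case: eqP => [->|] //=.
  by rewrite eq_sym (negbTE j0_neq).
Qed.

Lemma f_obj_point_mass k c d sigma (x : 'I_n -> R) : (1 <= j0 <= k)%N ->
  f_obj k c d sigma x point_mass
  = (1 - x i0) * (U0 c d j0 / U0 c d (sigma i0))
    + x i0 * (U1 k c d j0 / U1 k c d (sigma i0)).
Proof. by move=> j0_range; rewrite /f_obj sum_point_mass. Qed.

End PointMass.

Arguments point_mass {R n}.

Theorem claim3p2 (R : realFieldType) (m n k : nat)
  (A : 'M[rat]_(m, n)) (b : 'cV[rat]_m) (c d : nat -> R)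
  (sigma : 'I_n -> nat) :
  valid_intervals k c d ->
  (forall i, (1 <= sigma i <= k)%N) ->
  ~ (exists x : 'I_n -> R, in_box c d sigma x /\ K1 A b x) ->
  forall x : 'I_n -> R, K1 A b x ->
  exists p : 'I_n -> nat -> R, K2 k sigma p /\ 1 <= f_obj k c d sigma x p.
Proof.
move=> V sigma_range no_box x x_K1.
have /forallPn[i0] : ~~ [forall i, c (sigma i) <= x i <= d (sigma i)].
  by apply/negP => /forallP x_in_box; apply: no_box; exists x.
have [_ [c1 [dk _]]] := V.
have /andP[x_ge0 x_le1] := x_K1.1 i0.
have := sigma_range i0; rewrite negb_and -!ltNge.
case s_def: (sigma i0) => [//|t] s_range /orP[x_lt_c | d_lt_x].
- case: t s_def s_range x_lt_c => [|t] s_def s_range x_lt_c.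
    by rewrite c1 ltNge x_ge0 in x_lt_c.
  exists (point_mass i0 t.+1); split; first by apply: point_mass_K2; lia.
  rewrite f_obj_point_mass ?s_def; last lia.
  by apply: U_ratio_down_ge1 => //; apply: ltW.
- case: (ltngtP t.+1 k) s_range => // [s_lt_k | s_eq_k] s_range; last first.
    by rewrite s_eq_k dk ltNge x_le1 in d_lt_x.
  exists (point_mass i0 t.+2); split; first by apply: point_mass_K2; lia.
  rewrite f_obj_point_mass ?s_def; last lia.
  by apply: U_ratio_up_ge1 => //; apply: ltW.
Qed.
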